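(* Let $B\in M_n(\mathbb{Z})$, $B'\in M_{n'}(\mathbb{Z})$ be skew-symmetric and let $R\in M_{n',n}(\mathbb{Z}_{\ge0})$ satisfy ${}^tR\,B'\,R=B$. Then the algebra homomorphism $\psi_R:\mathcal{S}_B\to\mathcal{S}_{B'}$, $\psi_R(y_i)=\,:y'^{Rv_i}:$, is continuous with respect to the degree topologies if and only if every column of $R$ contains a nonzero entry.
   Context: For skew-symmetric $B\in M_n(\mathbb{Z})$, $\mathcal{S}_B$ is the skew polynomial algebra over $\mathbb{Q}(q)$ with basis the monomials $y^{\bf m}=y_1^{m_1}\cdots y_n^{m_n}$, ${\bf m}\in\mathbb{Z}_{\ge0}^n$, and multiplication determined by $y_iy_j=q^{2b_{ij}}y_jy_i$; similarly $\mathcal{S}_{B'}$ with generators $y'_k$. Normal ordering: $:y^{\bf m}:=q^{{}^t{\bf m}L{\bf m}}y^{\bf m}$ with $L$ the strictly lower triangular part of $B$ (similarly for $B'$). The degree topology on $\mathcal{S}_B$ is the linear topology whose basic neighbourhoods of $0$ are the spans of monomials of total degree $m_1+\dots+m_n\ge N$, $N\ge0$; its completion is the skew formal power series algebra $\widehat{\mathcal{S}_B}$. $v_i$ is the $i$-th unit vector. *)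

From HB Require Import structures.
From mathcomp Require Import all_boot all_order all_algebra.
From mathcomp Require Import fraction.
From mathcomp.multinomials Require Import mpoly.
Set Implicit Arguments. Unset Strict Implicit. Unset Printing Implicit Defensive.
Import Order.TTheory GRing.Theory Num.Theory.
Local Open Scope ring_scope.

Definition Kq : fieldType := {fraction {poly rat}}.
Definition qq : Kq := tofrac ('X : {poly rat}).

(* Underlying Q(q)-vector space of S_B: basis y^m, m in Z_{>=0}^n, encoded as
   the monomials 'X_[m] of {mpoly Kq[n]}.  The (commutative) ring structure
   of mpoly is NOT used; the skew product is skmul below. *)
Definition SB (n : nat) := {mpoly Kq[n]}.

(* t(a) L b, with L the strictly lower triangular part of B *)
Definition lowform n (B : 'M[int]_n) (a b : 'X_{1..n}) : int :=
  \sum_(i < n) \sum_(j < n) (if (j < i)%N then (a i)%:Z * B i j * (b j)%:Z else 0).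

(* y^a y^b = q^(2 ta L b) y^(a+b) (consequence of y_i y_j = q^(2 b_ij) y_j y_i) *)
Definition skmul n (B : 'M[int]_n) (p r : SB n) : SB n :=
  \sum_(a <- msupp p) \sum_(b <- msupp r)
     ((p@_a * r@_b * qq ^ (2%:Z * lowform B a b)) *: 'X_[mnm_add a b]).

Definition skone n : SB n := 'X_[mnm0].

Definition skpow n (B : 'M[int]_n) (p : SB n) (k : nat) : SB n :=
  iter k (skmul B p) (skone n).

Definition nmon n (B : 'M[int]_n) (m : 'X_{1..n}) : SB n :=
  qq ^ (lowform B m m) *: 'X_[m].

Definition colm n' n (R : 'M[nat]_(n', n)) (j : 'I_n) : 'X_{1..n'} :=
  [multinom R i j | i < n'].

Definition psi_gen n' n (B' : 'M[int]_n') (R : 'M[nat]_(n', n)) (j : 'I_n) : SB n' :=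
  nmon B' (colm R j).

Definition psi_mon n' n (B' : 'M[int]_n') (R : 'M[nat]_(n', n)) (m : 'X_{1..n}) : SB n' :=
  foldr (fun j acc => skmul B' (skpow B' (psi_gen B' R j) (m j)) acc)
        (skone n') (enum 'I_n).

Definition psiR n' n (B' : 'M[int]_n') (R : 'M[nat]_(n', n)) (p : SB n) : SB n' :=
  \sum_(m <- msupp p) (p@_m *: psi_mon B' R m).

(* Degree topology: basic neighbourhoods of 0 are
   U_N = span{ y^m : m_1+...+m_n >= N }. *)
Definition degU n (N : nat) (p : SB n) : Prop :=
  forall m, m \in msupp p -> (N <= mdeg m)%N.

Definition deg_open n (U : SB n -> Prop) : Prop :=
  forall x, U x -> exists N : nat, forall y, degU N y -> U (x + y).

Definition deg_continuous n n' (f : SB n -> SB n') : Prop :=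
  forall U : SB n' -> Prop, deg_open U -> deg_open (fun x => U (f x)).

From HB Require Import structures.
From mathcomp Require Import all_boot all_order all_algebra.
From mathcomp Require Import fraction zify.
From mathcomp.multinomials Require Import ssrcomplements mpoly.
Import Order.TTheory GRing.Theory Num.Theory.
Local Open Scope ring_scope.

(* psi_R is additive and sends y^m to a scalar multiple of y'^(R m), whose
   degree is sum_j m_j |R v_j|.  If no column of R vanishes this is at least
   deg m, so psi_R maps U_N into U'_N and is continuous.  If column j vanishes,
   psi_R (y_j^N) = 1 for every N, so the preimage of the open neighbourhood U'_1
   of 0 contains no U_N. *)

Section ExpandOverSupport.
Variables (n : nat) (R : nzRingType) (V : lmodType R) (F : 'X_{1..n} -> V).

Lemma sum_msupp_scale_bounded (p : {mpoly R[n]}) k : (msize p <= k)%N ->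
  \sum_(m <- msupp p) p@_m *: F m = \sum_(m : 'X_{1..n < k}) p@_m *: F m.
Proof.
move=> le_pk; rewrite (big_mksub 'X_{1..n < k}) ?msupp_uniq //=; last first.
  by move=> m /msize_mdeg_lt /leq_trans; apply.
by rewrite big_rmcond //= => m /memN_msupp_eq0 ->; rewrite scale0r.
Qed.

Lemma sum_msupp_scaleD (p q : {mpoly R[n]}) :
  \sum_(m <- msupp (p + q)) (p + q)@_m *: F m =
  \sum_(m <- msupp p) p@_m *: F m + \sum_(m <- msupp q) q@_m *: F m.
Proof.
set k := (msize p + msize q + msize (p + q))%N.
rewrite !(@sum_msupp_scale_bounded _ k) /k; try lia.
by rewrite -big_split; apply: eq_bigr => m _; rewrite mcoeffD scalerDl.
Qed.

End ExpandOverSupport.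

Section DegreeFiltration.
Context {n : nat}.
Implicit Types (p q : SB n) (m : 'X_{1..n}).

Lemma degUW {d1 d2 p} : degU d2 p -> (d1 <= d2)%N -> degU d1 p.
Proof. by move=> Hp le_d m /Hp; apply: leq_trans. Qed.

Lemma degU0 d : degU d (0 : SB n).
Proof. by move=> m; rewrite mcoeff_msupp mcoeff0 eqxx. Qed.

Lemma degUD d p q : degU d p -> degU d q -> degU d (p + q).
Proof. by move=> Hp Hq m /msuppD_le; rewrite mem_cat => /orP[/Hp|/Hq]. Qed.

Lemma degUZ d c p : degU d p -> degU d (c *: p).
Proof. by move=> Hp m /msuppZ_le /Hp. Qed.

Lemma degUX d m : (d <= mdeg m)%N -> degU d ('X_[m] : SB n).
Proof. by move=> le_dm m'; rewrite msuppX mem_seq1 => /eqP ->. Qed.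

Lemma degU_sum d (T : eqType) (s : seq T) (F : T -> SB n) :
  (forall x, x \in s -> degU d (F x)) -> degU d (\sum_(x <- s) F x).
Proof.
by move=> HF; rewrite big_seq; apply: big_ind => //; [apply: degU0 | apply: degUD].
Qed.

Lemma degU_open d : deg_open (@degU n d).
Proof. by move=> x Hx; exists d => y; apply: degUD. Qed.

Lemma degU_skone d : degU d (skone n) -> d = 0%N.
Proof. by move/(_ 0%MM); rewrite msuppX mem_seq1 eqxx mdeg0 leqn0 => /(_ isT)/eqP. Qed.

End DegreeFiltration.

Lemma deg_continuous_additiveP n n' (f : SB n -> SB n') :
  {morph f : x y / x + y} ->
  deg_continuous f <-> forall M, exists N, forall y, degU N y -> degU M (f y).
Proof.
move=> fD; have f0 : f 0 = 0 by apply: (addrI (f 0)); rewrite -fD !addr0.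
split=> [fC M | fU U U_open x Ufx].
  have U0 : degU M (f 0) by rewrite f0; apply: degU0.
  have [N HN] := fC _ (degU_open M) 0 U0.
  by exists N => y /HN; rewrite add0r.
have [M HM] := U_open _ Ufx; have [N HN] := fU M.
by exists N => y /HN /HM; rewrite fD.
Qed.

Section SkewProduct.
Variables (n : nat) (B : 'M[int]_n).

Lemma degU_skmul d1 d2 p r :
  degU d1 p -> degU d2 r -> degU (d1 + d2) (skmul B p r).
Proof.
move=> Hp Hr; apply: degU_sum => a /Hp ha; apply: degU_sum => b /Hr hb.
by apply/degUZ/degUX; rewrite (mdegD a b) leq_add.
Qed.

Lemma degU_skpow d p k : degU d p -> degU (d * k) (skpow B p k).
Proof.
move=> Hp; elim: k => [|k IH]; first by move=> m _; rewrite muln0.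
by rewrite mulnS; apply: degU_skmul.
Qed.

Lemma lowform0l b : lowform B 0%MM b = 0.
Proof.
rewrite /lowform big1 // => i _; rewrite big1 // => j _.
by case: ifP => // _; rewrite mnmE !mul0r.
Qed.

Lemma nmon0 : nmon B 0%MM = skone n.
Proof. by rewrite /nmon lowform0l expr0z scale1r. Qed.

Lemma skmul1 p : skmul B (skone n) p = p.
Proof.
rewrite /skmul /skone msuppX big_seq1 [RHS]mpolyE; apply: eq_bigr => b _.
by rewrite mcoeffX eqxx lowform0l mulr0 expr0z mulr1 mul1r add0m.
Qed.

Lemma skpow1n k : skpow B (skone n) k = skone n.
Proof. by elim: k => //= k IH; rewrite /skpow /= -/(skpow _ _ _) IH skmul1. Qed.

End SkewProduct.

Section PsiR.
Variables (n n' : nat) (B' : 'M[int]_n') (R : 'M[nat]_(n', n)).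
Implicit Types (m : 'X_{1..n}) (y : SB n).

Lemma psiRD : {morph psiR B' R : x y / x + y}.
Proof. exact: sum_msupp_scaleD. Qed.

Lemma psiRX m : psiR B' R 'X_[m] = psi_mon B' R m.
Proof. by rewrite /psiR msuppX big_seq1 mcoeffX eqxx scale1r. Qed.

Lemma mdeg_colm j : mdeg (colm R j) = (\sum_i R i j)%N.
Proof. by rewrite mdegE; apply: eq_bigr => i _; rewrite mnmE. Qed.

Lemma degU_psi_mon m :
  degU (\sum_j mdeg (colm R j) * m j)%N (psi_mon B' R m).
Proof.
rewrite -big_enum /psi_mon; elim: (enum 'I_n) => [|j s IH].
  by rewrite big_nil => m' _.
by rewrite big_cons; apply/degU_skmul/IH/degU_skpow/degUZ/degUX.
Qed.

Lemma psi_mon_skone m :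
  (forall j, m j != 0%N -> colm R j = 0%MM) -> psi_mon B' R m = skone n'.
Proof.
move=> zero_cols; rewrite /psi_mon; elim: (enum 'I_n) => //= j s ->.
have [-> | /zero_cols col0] := eqVneq (m j) 0%N; first exact: skmul1.
by rewrite /psi_gen col0 nmon0 skpow1n skmul1.
Qed.

Lemma degU_psiR N y : (forall j, exists i, R i j != 0%N) ->
  degU N y -> degU N (psiR B' R y).
Proof.
move=> nz_cols Hy; apply: degU_sum => m /Hy le_Nm.
apply/degUZ/(degUW (degU_psi_mon m))/(leq_trans le_Nm).
rewrite mdegE; apply: leq_sum => j _; apply: leq_pmull.
have [i nz_Rij] := nz_cols j.
by rewrite mdeg_colm (bigD1 i) //= addn_gt0 lt0n nz_Rij.
Qed.

End PsiR.

(* The skew-symmetry of B, B' and the relation tR B' R = B are what make psi_R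
   an algebra homomorphism; its continuity does not depend on them. *)
Theorem proposition4p5 (n n' : nat) (B : 'M[int]_n) (B' : 'M[int]_n')
    (R : 'M[nat]_(n', n)) :
  B^T = - B -> B'^T = - B' ->
  (map_mx (fun k : nat => k%:Z) R)^T *m B' *m map_mx (fun k : nat => k%:Z) R = B ->
  deg_continuous (psiR B' R) <-> (forall j : 'I_n, exists i : 'I_n', R i j != 0%N).
Proof.
move=> _ _ _; rewrite deg_continuous_additiveP; last exact: psiRD.
split=> [psiR_cont j | nz_cols M]; last by exists M => y; apply: degU_psiR.
apply/existsP; apply: contraT => /existsPn zero_col.
have col0 : colm R j = 0%MM.
  by apply/mnmP => i; rewrite !mnmE; apply/eqP/negPn/zero_col.
have [N HN] := psiR_cont 1%N.
have /HN : degU N ('X_[U_(j) *+ N] : SB n).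
  by apply: degUX; rewrite mdegMn mdeg1 mul1n.
rewrite psiRX psi_mon_skone => [/degU_skone // | i].
by rewrite mulmnE mnm1E; have [<- | _] := eqVneq j i.
Qed.
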